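(* Let $\lambda$ be Lebesgue measure on $[0,1)$. For every sequence $(x_n)_{n\ge1}$ in $[0,1)$ and every scale sequence $(s_n)_{n\ge1}$, the function $\omega(x)=\liminf_{n\to\infty} s_n\,|x_n-x|$ satisfies $\omega(x)\in\{0,\infty\}$ for $\lambda$-almost every $x\in[0,1)$. That is, $\lambda$ is decisive.
   Context: A scale sequence is a sequence of positive reals $s_n$ with $s_n\to\infty$. A Borel probability measure $\nu$ on a metric space $(X,d)$ is decisive if for every sequence $(x_n)$ in $X$ and every scale sequence $(s_n)$, the function $\omega(x)=\liminf_n s_n d(x_n,x)$ lies in $\{0,\infty\}$ for $\nu$-a.e. $x$. *)

From HB Require Import structures.
From mathcomp Require Import all_boot all_order all_algebra.
From mathcomp Require Import all_classical all_reals all_analysis.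
Set Implicit Arguments. Unset Strict Implicit. Unset Printing Implicit Defensive.
Import Order.TTheory GRing.Theory Num.Theory.
Local Open Scope classical_set_scope.
Local Open Scope ring_scope.

Definition scale_seq (R : realType) (s : R^nat) : Prop :=
  (forall n, 0 < s n) /\ s @ \oo --> +oo.

Definition omega (R : realType) (xs s : R^nat) (x : R) : \bar R :=
  limn_einf (fun n => (s n * `|xs n - x|)%:E).

From HB Require Import structures.
From mathcomp Require Import all_boot all_order all_algebra.
From mathcomp Require Import all_classical all_reals all_analysis.
From mathcomp Require Import ring.
Set Implicit Arguments. Unset Strict Implicit. Unset Printing Implicit Defensive.
Import Order.TTheory GRing.Theory Num.Theory numFieldNormedType.Exports.
Local Open Scope classical_set_scope.
Local Open Scope ring_scope.

(* If 0 < omega(x) < +oo, pick N, d and M with d <= s_n |x_n - x| for all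
   n >= N and s_n |x_n - x| < M for infinitely many n.  The set G of points
   satisfying the first condition misses the ball of radius d/s_n around x_n,
   and for the infinitely many n of the second condition that ball lies in
   the ball of radius 2M/s_n around x.  So G fills at most a fraction
   1 - d/(2M) of arbitrarily small balls around x, and x is not a density
   point of G although x is in G.  By the Lebesgue density theorem such x
   form a null set, and countably many triples (N, d, M) suffice. *)

Section limn_einf_bounds.
Context {R : realType}.
Local Open Scope ereal_scope.
Implicit Types (u : (\bar R)^nat) (a : \bar R).

Lemma limn_einfE u : limn_einf u = ereal_sup (range (einfs u)).
Proof. by rewrite limn_einf_lim; apply/cvg_lim => //; exact: cvg_einfs_sup. Qed.

Lemma einfs_le_limn_einf u m : einfs u m <= limn_einf u.
Proof. by rewrite limn_einfE; apply: ereal_sup_ubound; exists m. Qed.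

Lemma limn_einf_lt_frequently u a :
  limn_einf u < a -> forall m, exists2 n, (m <= n)%N & u n < a.
Proof.
move=> ua m; have := le_lt_trans (einfs_le_limn_einf u m) ua.
by move=> /ereal_inf_lt[_ [n /= mn <-]] una; exists n.
Qed.

Lemma limn_einf_gt_eventually u a :
  a < limn_einf u -> exists N, forall n, (N <= n)%N -> a < u n.
Proof.
rewrite limn_einfE => /ereal_sup_gt[_ [N _ <-]] aN.
exists N => n Nn; apply: (lt_le_trans aN).
by apply: ereal_inf_lbound; exists n.
Qed.

Lemma limn_einf_ge0 u : (forall n, 0 <= u n) -> 0 <= limn_einf u.
Proof.
move=> u0; apply: le_trans (einfs_le_limn_einf u 0).
by apply: le_ereal_inf_tmp => _ [n _ <-].
Qed.

Lemma limn_einf_fin_pos_bounds (u : R^nat) : (forall n, (0 <= u n)%R) ->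
  limn_einf (fun n => (u n)%:E) <> 0 -> limn_einf (fun n => (u n)%:E) <> +oo ->
  exists N k M : nat, (forall n, (N <= n)%N -> k.+1%:R^-1 <= u n)%R /\
    (forall m, exists2 n, (m <= n)%N & u n < M%:R)%R.
Proof.
set w := limn_einf _ => u0 w0 woo.
have w_ge0 : 0 <= w by apply: limn_einf_ge0 => n; rewrite lee_fin.
have wE : w = (fine w)%:E by rewrite fineK// ge0_fin_numE// ltey; apply/eqP.
have w_gt0 : (0 < fine w)%R.
  by rewrite -lte_fin -wE lt_def w_ge0 andbT; apply/eqP.
pose k := Num.truncn (fine w)^-1.
have kw : (k.+1%:R^-1)%:E < w.
  by rewrite wE lte_fin -(invrK (fine w)) ltf_pV2 ?posrE ?invr_gt0 ?truncnS_gt.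
have [N uN] := limn_einf_gt_eventually kw.
pose M := (Num.truncn (fine w)).+1.
have wM : w < M%:R%:E by rewrite wE lte_fin truncnS_gt.
exists N, k, M; split.
- by move=> n Nn; rewrite -lee_fin ltW// uN.
- move=> m; have [n mn unM] := limn_einf_lt_frequently wM m.
  by exists n; rewrite // -lte_fin.
Qed.

End limn_einf_bounds.

Section density_ratio.
Context {R : realType}.
Local Notation mu := (@lebesgue_measure R).

Lemma ball_sub_ball (x c r rho : R) :
  `|x - c| + rho <= r -> ball c rho `<=` ball x r.
Proof.
move=> xcr y; rewrite /ball /= => cy.
by rewrite (le_lt_trans (ler_distD c _ _))// (lt_le_trans _ xcr)// ltrD2l.
Qed.

Lemma lebesgue_measure_setI_ball_le (A : set R) (x c r rho : R) :
  measurable A -> 0 <= rho -> 0 <= r ->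
  ball c rho `<=` ball x r -> A `&` ball c rho = set0 ->
  (mu (A `&` ball x r) <= ((r - rho) *+ 2)%:E)%E.
Proof.
move=> mA rho0 r0 sub dis.
have mB := measurable_realfun.measurable_ball x r.
have mC := measurable_realfun.measurable_ball c rho.
have muB : mu (ball x r) = (r *+ 2)%:E := lebesgue_measure_ball x r0.
have muC : mu (ball c rho) = (rho *+ 2)%:E := lebesgue_measure_ball c rho0.
have mAB : measurable (A `&` ball x r) by exact: measurableI.
have disAB : (A `&` ball x r) `&` ball c rho = set0 by rewrite setIAC dis set0I.
have : (mu (A `&` ball x r `|` ball c rho) <= mu (ball x r))%E.
  by rewrite le_measure ?inE//; [exact: measurableU | move=> y [[_ ?]|/sub]].
have muU : mu (A `&` ball x r `|` ball c rho) =
    (mu (A `&` ball x r) + mu (ball c rho))%E := measureU mu mAB mC disAB.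
by rewrite muU muB muC mulrnBl EFinB leeBrDr.
Qed.

Lemma lebesgue_density_ratio_le (A : set R) (x c r rho : R) :
  measurable A -> 0 <= rho -> 0 < r ->
  ball c rho `<=` ball x r -> A `&` ball c rho = set0 ->
  (mu (A `&` ball x r) * (mu (ball x r))^-1 <= (1 - rho / r)%:E)%E.
Proof.
move=> mA rho0 r0 sub dis.
have muB : mu (ball x r) = (r *+ 2)%:E := lebesgue_measure_ball x (ltW r0).
rewrite muB inver mulrn_eq0 (gt_eqF r0) /=.
have -> : 1 - rho / r = (r - rho) *+ 2 / (r *+ 2).
  by rewrite !mulr2n; field; rewrite !gt_eqF ?addr_gt0.
rewrite EFinM lee_wpmul2r//; first by rewrite lee_fin invr_ge0 mulrn_wge0// ltW.
exact: lebesgue_measure_setI_ball_le (ltW r0) sub dis.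
Qed.

Lemma lebesgue_density_negligible (A : set R) : measurable A ->
  mu.-negligible [set x | ~ (mu (A `&` ball x r) * (mu (ball x r))^-1)%E
                              @[r --> 0^'+] --> (\1_A x)%:E].
Proof. exact: lebesgue_density. Qed.

Lemma at_right0_not_cvg (f : R -> \bar R) (z : R) : z < 1 ->
  (forall e, 0 < e -> exists2 r, 0 < r < e & (f r <= z%:E)%E) ->
  ~ f r @[r --> 0^'+] --> 1%:E.
Proof.
move=> z1 fz /fine_cvgP[ffin /cvgr_gt/(_ z z1) fgt].
have : \forall r \near 0^'+, (z%:E < f r)%E.
  by apply: filterS2 ffin fgt => r /fineK <-; rewrite lte_fin.
rewrite near_withinE => /nbhs_ballP[e /= e0 zf].
have [r /andP[r0 re] frz] := fz e e0.
have /zf/(_ r0) : ball 0 e r by rewrite /ball /= sub0r normrN gtr0_norm.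
by rewrite ltNge frz.
Qed.

End density_ratio.

Section scaled_distances.
Context {R : realType}.
Local Notation mu := (@lebesgue_measure R).
Variables xs s : R^nat.

Definition far_from (N : nat) (d : R) :=
  [set x : R | forall n, (N <= n)%N -> d <= s n * `|xs n - x|].

Definition frequently_near (M : R) :=
  [set x : R | forall m, exists2 n, (m <= n)%N & s n * `|xs n - x| < M].

Hypothesis s_gt0 : forall n, 0 < s n.

Lemma far_fromE N d :
  far_from N d = \bigcap_(n in [set n | (N <= n)%N]) ~` ball (xs n) (d / s n).
Proof.
apply/seteqP; split => x /= Fx n Nn.
- by apply/negP; rewrite /ball /= -leNgt ler_pdivrMr// mulrC; exact: Fx.
- by have /negP := Fx n Nn; rewrite /ball /= -leNgt ler_pdivrMr// mulrC.
Qed.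

Lemma measurable_far_from N d : measurable (far_from N d).
Proof.
rewrite far_fromE; apply: bigcap_measurableType => n _.
apply: measurableC; exact: measurable_realfun.measurable_ball.
Qed.

Lemma far_from_ball_disjoint N d n :
  (N <= n)%N -> far_from N d `&` ball (xs n) (d / s n) = set0.
Proof.
move=> Nn; apply/seteqP; split => // y [Fy].
by rewrite /ball /= ltr_pdivlMr// mulrC ltNge Fy.
Qed.

Hypothesis s_cvgy : s @ \oo --> +oo.

Lemma far_from_not_density_point N d M x : 0 < d ->
  far_from N d x -> frequently_near M x ->
  ~ (mu (far_from N d `&` ball x r) * (mu (ball x r))^-1)%E @[r --> 0^'+]
      --> (\1_(far_from N d) x)%:E.
Proof.
move=> d0 Fx Mx; rewrite indicE mem_set//.
have [n0 Nn0 n0M] := Mx N.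
have dM : d < M := le_lt_trans (Fx n0 Nn0) n0M.
have M0 : 0 < M := lt_trans d0 dM.
apply: (at_right0_not_cvg (z := 1 - d / (2 * M))).
  by rewrite ltrBlDr ltrDl divr_gt0// mulr_gt0.
move=> e e0.
have [N' _ sN'] := (cvgryPgt s).1 s_cvgy (2 * M / e).
have [n Nn xnM] := Mx (maxn N N').
have sn := s_gt0 n.
have sn_large : 2 * M / e < s n.
  by apply: sN'; rewrite /= (leq_trans (leq_maxr _ _) Nn).
exists (2 * M / s n).
  by rewrite divr_gt0 ?mulr_gt0//= ltr_pdivrMr// (mulrC e) -ltr_pdivrMr.
have -> : d / (2 * M) = (d / s n) / (2 * M / s n).
  by field; rewrite !gt_eqF.
apply: lebesgue_density_ratio_le.
- exact: measurable_far_from.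
- by rewrite divr_ge0 ?ltW.
- by rewrite divr_gt0 ?mulr_gt0.
- have xnx : `|xs n - x| <= M / s n by rewrite ler_pdivlMr// mulrC ltW.
  have dsn : d / s n <= M / s n by rewrite ler_pM2r ?invr_gt0 ?ltW.
  apply: ball_sub_ball; rewrite distrC; apply: le_trans (lerD xnx dsn) _.
  by rewrite -mulrDl -mulr2n mulr_natl.
- by apply: far_from_ball_disjoint; rewrite (leq_trans (leq_maxl _ _) Nn).
Qed.

End scaled_distances.

Theorem proposition5p2 (R : realType) (xs s : R^nat) :
  (forall n, xs n \in `[0, 1[) -> scale_seq s ->
  (@lebesgue_measure R).-negligible
    ([set x | x \in `[0, 1[] `&`
     [set x | omega xs s x <> 0%E /\ omega xs s x <> +oo%E]).
Proof.
move=> _ [s_gt0 s_cvgy].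
pose bad N k M := far_from xs s N k.+1%:R^-1 `&` frequently_near xs s M%:R.
have bad_negligible :
    (@lebesgue_measure R).-negligible (\bigcup_N \bigcup_k \bigcup_M bad N k M).
  apply: negligible_bigcup => N; apply: negligible_bigcup => k.
  apply: negligible_bigcup => M.
  have mF := measurable_far_from xs s_gt0 N k.+1%:R^-1.
  apply: negligibleS (lebesgue_density_negligible mF).
  move=> x [Fx Mx]; apply: (far_from_not_density_point s_gt0 s_cvgy _ Fx Mx).
  by rewrite invr_gt0.
apply: negligibleS bad_negligible => x [_ [w0 woo]].
have u_ge0 n : 0 <= s n * `|xs n - x| by rewrite mulr_ge0// ltW.
have [N [k [M [far near]]]] := limn_einf_fin_pos_bounds u_ge0 w0 woo.
by exists N => //; exists k => //; exists M.
Qed.
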